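(* Let $\hat{\mathbb{N}}$ be the set of odd integers $n\ge3$, let $n \in \hat{\mathbb{N}}$ and $M \subseteq \hat{\mathbb{N}} \setminus \{n\}$. Let $T$ be the set of all partial Boolean functions whose domain does not contain the all-zero tuple. Then $\mathrm{pPol}\, R^{0,2}_n \not\supseteq T \cap \bigcap_{m \in M} \mathrm{pPol}\, R^{0,2}_m$.
   Context: Partial functions are on $\{0,1\}$: an $n$-ary partial function is a map $f:\operatorname{dom} f\to\{0,1\}$ with $\operatorname{dom} f\subseteq\{0,1\}^n$; an empty intersection of subsets of the set of all partial functions is understood as the set of all partial functions. For $\rho\subseteq\{0,1\}^h$, $\mathrm{pPol}\,\rho$ is the set of partial functions $f$ such that for every $h\times n$ matrix whose rows lie in $\operatorname{dom} f$ and whose columns lie in $\rho$, the column obtained by applying $f$ row-wise lies in $\rho$. Let $\rho_{0,2}=\{(0,0),(0,1),(1,0)\}$. For $n\ge2$, $R^{0,2}_{C,n}=\{(x_1,\dots,x_n)\in\{0,1\}^n: (x_i,x_{i+1})\in\rho_{0,2}\text{ for } i\in[n], \text{ with } x_{n+1}:=x_1\}$, $R^{0,2}_{K,n}=\{(x_1,\dots,x_n): (x_i,x_j)\in\rho_{0,2}\text{ for all } i\ne j\}$, and $R^{0,2}_n=R^{0,2}_{C,n}\times R^{0,2}_{K,n}\subseteq\{0,1\}^{2n}$. *)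

From mathcomp Require Import all_boot.
Set Implicit Arguments. Unset Strict Implicit. Unset Printing Implicit Defensive.

Notation btuple k := {ffun 'I_k -> bool}.

(* An n-ary partial Boolean function: f x = Some b means x \in dom f and f x = b;
   f x = None means x \notin dom f. *)
Definition pfun : Type := {k : nat & {ffun btuple k -> option bool}}.
Definition pf_arity (f : pfun) : nat := projT1 f.
Definition pf_fun (f : pfun) : btuple (pf_arity f) -> option bool := projT2 f.
Arguments pf_fun : clear implicits.

Definition relation (h : nat) := pred (btuple h).

Definition pPol (h : nat) (rho : relation h) (f : pfun) : Prop :=
  forall (M : 'I_h -> btuple (pf_arity f)) (v : btuple h),
    (forall i, pf_fun f (M i) = Some (v i)) ->
    (forall j : 'I_(pf_arity f), rho [ffun i => M i j]) ->
    rho v.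

Definition rho02 : pred (bool * bool) :=
  fun p => p \in [:: (false, false); (false, true); (true, false)].

(* R^{0,2}_{C,n}: cyclic condition, with x_{n+1} := x_1. *)
Definition RC02 (n : nat) : relation n :=
  fun x =>
  [forall i : 'I_n, forall j : 'I_n,
     (j == (i.+1 %% n) :> nat) ==> rho02 (x i, x j)].

Definition RK02 (n : nat) : relation n :=
  fun x => [forall i : 'I_n, forall j : 'I_n, (i != j) ==> rho02 (x i, x j)].

Definition R02 (n : nat) : relation (n + n) :=
  fun x => RC02 [ffun i : 'I_n => x (lshift n i)]
        && RK02 [ffun i : 'I_n => x (rshift n i)].

Definition inT (f : pfun) : Prop := pf_fun f [ffun => false] = None.

Definition Nhat (m : nat) : Prop := odd m /\ 3 <= m.

From mathcomp Require Import all_boot zify.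
Set Implicit Arguments. Unset Strict Implicit. Unset Printing Implicit Defensive.

(* Code the vertices of a finite graph G by nonzero 0/1 tuples that are disjoint
   (columnwise in rho_{0,2}) exactly when the vertices are adjacent.  A partial
   function defined on the codes then lies in pPol R^{0,2}_m iff its values along
   every homomorphism from C_m + K_m into G form a tuple of R^{0,2}_m.  Take
   G = C_n + K_n and let f be 1 exactly on two adjacent vertices of C_n: the
   identity homomorphism shows that f is not in pPol R^{0,2}_n.  For odd m <> n,
   a homomorphism maps K_m injectively into one component, so m < n; a triangle in
   C_n would force n <= 3, and an odd closed walk of length m in C_n would force
   n <= m, so both C_m and K_m land in K_n, where f vanishes. *)

Lemma odd_balance_bound n U D a b :
  odd (U + D) -> D + n * a = U + n * b -> n <= U + D.
Proof.
move=> oUD; have [->|ab] := eqVneq a b.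
  by move/addIn => eUD; move: oUD; rewrite eUD addnn odd_double.
case: (ltngtP a b) ab => // ab _; nia.
Qed.

Section CycleGraph.
Variable n : nat.

Definition cycle_adj : rel 'I_n := fun x y => (y == ordS x) || (x == ordS y).

Lemma cycle_adj_sym : symmetric cycle_adj.
Proof. by move=> x y; rewrite /cycle_adj orbC. Qed.

Lemma val_ordS (x : 'I_n) : nat_of_ord (ordS x) = if x.+1 == n then 0 else x.+1.
Proof.
case: eqP => [/= ->|ne]; first by rewrite modnn.
by rewrite /= modn_small //; have := ltn_ord x; lia.
Qed.

Lemma cycle_adj_irr : 1 < n -> irreflexive cycle_adj.
Proof.
move=> n_gt1 x; rewrite /cycle_adj orbb; apply/negbTE/eqP => /(congr1 (@nat_of_ord n)).
by rewrite val_ordS; case: eqP => e; lia.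
Qed.

(* A step of a walk on C_n goes up or down by one, possibly wrapping around n;
   summed along a closed walk, #up - #down becomes a multiple of n, which is odd,
   hence nonzero, when the length is odd. *)
Lemma cycle_step_balance (x y : 'I_n) : cycle_adj x y ->
  y + (y != ordS x) + n * ((y == ordS x) && (x.+1 == n))
  = x + (y == ordS x) + n * ((y != ordS x) && (y.+1 == n)).
Proof.
move=> /orP adj_xy; have := ltn_ord x; have := ltn_ord y.
case: (eqVneq y (ordS x)) adj_xy => [-> _ | _ [] //= /eqP ->];
  rewrite val_ordS; case: eqP => /= e; lia.
Qed.

Lemma odd_closed_walk_length L (w : 'I_L -> 'I_n) :
  odd L -> (forall i, cycle_adj (w i) (w (ordS i))) -> n <= L.
Proof.
move=> oddL walk.
pose up i := w (ordS i) == ordS (w i).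
pose wrap_up i := up i && ((w i).+1 == n).
pose wrap_down i := ~~ up i && ((w (ordS i)).+1 == n).
have balance : \sum_i (w (ordS i) + ~~ up i + n * wrap_up i)
             = \sum_i (w i + up i + n * wrap_down i).
  by apply: eq_bigr => i _; exact: cycle_step_balance.
rewrite !big_split -!big_distrr /= -!addnA in balance.
rewrite -(reindex_inj (@ordS_inj L) (P := xpredT) (F := fun i => nat_of_ord (w i))) /= in balance.
have steps : \sum_i up i + \sum_i ~~ up i = L.
  rewrite -big_split /= (eq_bigr (fun _ => 1)) => [|i _]; last by case: (up i).
  by rewrite sum_nat_const card_ord muln1.
rewrite -steps; apply: (odd_balance_bound (a := \sum_i wrap_up i) (b := \sum_i wrap_down i)).
  by rewrite steps.
exact: addnI balance.
Qed.

End CycleGraph.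

Lemma ordS_invariant_const (T : Type) L (g : 'I_L -> T) :
  (forall i, g (ordS i) = g i) -> forall i j, g i = g j.
Proof.
move=> inv i j; have L_gt0 : 0 < L by case: L i {j g inv} => [[]|].
suff toZero : forall k, g k = g (Ordinal L_gt0) by rewrite !toZero.
case=> k; elim: k => [|k IHk] lt_kL; first by congr g; apply/val_inj.
rewrite -(IHk (ltnW lt_kL)) -[g (Ordinal (ltnW _))]inv.
by congr g; apply/val_inj; rewrite /= modn_small.
Qed.

Lemma rho02E a b : rho02 (a, b) = ~~ (a && b).
Proof. by case: a; case: b. Qed.

Lemma R02P m (x : btuple (m + m)) :
  reflect ((forall i : 'I_m, ~~ (x (lshift m i) && x (lshift m (ordS i)))) /\
           (forall i j : 'I_m, i != j -> ~~ (x (rshift m i) && x (rshift m j))))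
          (R02 x).
Proof.
apply: (iffP andP) => [[/forallP C /forallP K] | [C K]]; split.
- by move=> i; have /forallP/(_ (ordS i))/implyP := C i; rewrite eqxx rho02E !ffunE; apply.
- by move=> i j ij; have /forallP/(_ j)/implyP := K i; rewrite rho02E !ffunE; apply.
- apply/forallP => i; apply/forallP => j; apply/implyP => /eqP j_succ.
  by rewrite rho02E !ffunE (_ : j = ordS i) //; apply/val_inj.
- apply/forallP => i; apply/forallP => j; apply/implyP => ij.
  by rewrite rho02E !ffunE K.
Qed.

Section DisjointnessEncoding.
Variables (V : finType) (adj : rel V).
Hypotheses (adj_irr : irreflexive adj) (adj_sym : symmetric adj).

Definition enc_support (v : V) (c : V * V) : bool :=
  (v \in [:: c.1; c.2]) && ~~ adj c.1 c.2.

Definition enc (v : V) : btuple #|{: V * V}| := [ffun k => enc_support v (enum_val k)].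

Lemma encE v c : enc v (enum_rank c) = enc_support v c.
Proof. by rewrite ffunE enum_rankK. Qed.

Lemma enc_diag v : enc v (enum_rank (v, v)).
Proof. by rewrite encE /enc_support /= mem_head adj_irr. Qed.

Lemma enc_disjointE u v : [forall k, ~~ (enc u k && enc v k)] = adj u v.
Proof.
apply/forallP/idP => [disj | adj_uv k].
  apply/negPn/negP => nadj; have := disj (enum_rank (u, v)).
  by rewrite !encE /enc_support /= nadj !inE !eqxx orbT.
rewrite -(enum_valK k) !encE /enc_support; case: (enum_val k) => x y /=.
rewrite !inE; apply/negP => /andP[/andP[u_xy nadj_xy] /andP[v_xy _]].
case/orP: u_xy v_xy => /eqP ? /orP[] /eqP ?; subst;
  by move: adj_uv nadj_xy; rewrite ?adj_irr // => adj_uv; rewrite ?adj_uv // adj_sym adj_uv.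
Qed.

Lemma enc_inj : injective enc.
Proof.
move=> u v e; have := enc_diag u; rewrite e encE /enc_support /= !inE orbb.
by case/andP => /eqP.
Qed.

Definition cycle_clique_hom m (w : 'I_(m + m) -> V) : Prop :=
  (forall i : 'I_m, adj (w (lshift m i)) (w (lshift m (ordS i)))) /\
  (forall i j : 'I_m, i != j -> adj (w (rshift m i)) (w (rshift m j))).

Variable S : pred V.

Definition graph_pfun : pfun :=
  existT _ #|{: V * V}|
    [ffun x => if [pick v | x == enc v] is Some v then Some (S v) else None].

Lemma graph_pfun_enc v : pf_fun graph_pfun (enc v) = Some (S v).
Proof.
rewrite /pf_fun /= ffunE; case: pickP => [u /eqP/enc_inj -> // | no_v].
by have := no_v v; rewrite eqxx.
Qed.

Lemma graph_pfun_some x b :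
  pf_fun graph_pfun x = Some b -> exists2 v, x = enc v & b = S v.
Proof.
rewrite /pf_fun /= ffunE; case: pickP => [v /eqP -> [<-] | //].
by exists v.
Qed.

Lemma graph_pfun_inT : inT graph_pfun.
Proof.
rewrite /inT /pf_fun /= ffunE; case: pickP => [v /eqP e0 | //].
by have := enc_diag v; rewrite -e0 ffunE.
Qed.

Lemma pPol_R02_graph m :
  pPol (@R02 m) graph_pfun <->
  (forall w : 'I_(m + m) -> V, cycle_clique_hom w -> R02 [ffun i => S (w i)]).
Proof.
split=> [pol w [homC homK] | homR02 Mx v rows cols].
  apply: (pol (fun i => enc (w i))) => [i | k].
    by rewrite graph_pfun_enc ffunE.
  apply/R02P; split=> [i | i j ij].
    by move: (homC i); rewrite -enc_disjointE => /forallP/(_ k); rewrite !ffunE.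
  by move: (homK i j ij); rewrite -enc_disjointE => /forallP/(_ k); rewrite !ffunE.
have /fin_all_exists[w enc_w] : forall i, exists u, Mx i = enc u /\ v i = S u.
  by move=> i; have [u] := graph_pfun_some (rows i); exists u.
have -> : v = [ffun i => S (w i)] by apply/ffunP => i; rewrite ffunE (enc_w i).2.
apply: homR02; split=> [i | i j ij]; rewrite -enc_disjointE; apply/forallP => k;
  rewrite -!(enc_w _).1; have /R02P[colC colK] := cols k.
  by move: (colC i); rewrite !ffunE.
by move: (colK i j ij); rewrite !ffunE.
Qed.

End DisjointnessEncoding.

Section CyclePlusClique.
Variable n : nat.
Hypothesis n_gt2 : 2 < n.

Definition cycle_plus_clique : rel ('I_n + 'I_n) := fun u v =>
  match u, v with
  | inl x, inl y => cycle_adj x y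
  | inr x, inr y => x != y
  | _, _ => false
  end.

Definition on_cycle (u : 'I_n + 'I_n) : bool := if u is inl _ then true else false.

Definition vertex_index (u : 'I_n + 'I_n) : 'I_n := match u with inl x | inr x => x end.

Definition first_edge : pred ('I_n + 'I_n) := fun u => on_cycle u && (vertex_index u < 2).

Lemma cycle_plus_clique_irr : irreflexive cycle_plus_clique.
Proof. by case=> x /=; rewrite ?eqxx ?cycle_adj_irr // ltnW. Qed.

Lemma cycle_plus_clique_sym : symmetric cycle_plus_clique.
Proof. by do 2!case=> ? //=; rewrite (cycle_adj_sym, eq_sym). Qed.

Lemma cycle_plus_clique_same_side u v :
  cycle_plus_clique u v -> on_cycle u = on_cycle v.
Proof. by case: u; case: v. Qed.

Lemma cycle_plus_clique_on_cycle u v : on_cycle u -> cycle_plus_clique u v ->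
  cycle_adj (vertex_index u) (vertex_index v).
Proof. by case: u; case: v. Qed.

Lemma vertex_index_inj u v :
  on_cycle u = on_cycle v -> vertex_index u = vertex_index v -> u = v.
Proof. by case: u; case: v => //= x y _ ->. Qed.

Lemma split_cycle_clique_hom : cycle_clique_hom cycle_plus_clique (@split n n).
Proof.
split=> [i | i j ij]; rewrite ?(unsplitK (inl _)) ?(unsplitK (inr _)) //=.
by rewrite /cycle_adj eqxx.
Qed.

Lemma split_not_R02 : ~~ R02 [ffun i => first_edge (@split n n i)].
Proof.
apply/R02P => -[/(_ (Ordinal (ltnW (ltnW n_gt2))))].
by rewrite !ffunE !(unsplitK (inl _)) /first_edge /= modn_small // ltnW.
Qed.

Section HomFromCycleClique.
Variables (m : nat) (w : 'I_(m + m) -> 'I_n + 'I_n).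
Hypotheses (odd_m : odd m) (m_gt2 : 2 < m) (m_neq_n : m != n).
Hypothesis w_hom : cycle_clique_hom cycle_plus_clique w.

Lemma clique_part_same_side i j :
  on_cycle (w (rshift m i)) = on_cycle (w (rshift m j)).
Proof.
have [-> // | ij] := eqVneq i j.
exact/cycle_plus_clique_same_side/w_hom.2.
Qed.

Lemma clique_part_card_lt : m < n.
Proof.
rewrite ltn_neqAle m_neq_n /=.
have idx_inj : injective (fun i => vertex_index (w (rshift m i))).
  move=> i j /(vertex_index_inj (clique_part_same_side i j)) e.
  apply/eqP/negPn/negP => /w_hom.2; by rewrite e cycle_plus_clique_irr.
by have := leq_card _ idx_inj; rewrite !card_ord.
Qed.

Lemma clique_part_off_cycle i : ~~ on_cycle (w (rshift m i)).
Proof.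
apply/negP => on_i.
pose vertex (t : 'I_3) := w (rshift m (widen_ord m_gt2 t)).
have : n <= 3; last by have := clique_part_card_lt; lia.
apply: (@odd_closed_walk_length n 3 (fun t => vertex_index (vertex t))) => // t.
apply: cycle_plus_clique_on_cycle; first by rewrite (clique_part_same_side _ i).
by apply: w_hom.2; case: t => [[|[|[|]]] ?].
Qed.

Lemma cycle_part_off_cycle i : ~~ on_cycle (w (lshift m i)).
Proof.
apply/negP => on_i.
have on_all j : on_cycle (w (lshift m j)).
  rewrite (@ordS_invariant_const _ _ (fun j => on_cycle (w (lshift m j))) _ j i) //.
  by move=> k; symmetry; apply/cycle_plus_clique_same_side/w_hom.1.
have : n <= m; last by have := clique_part_card_lt; lia.
apply: (@odd_closed_walk_length n m (fun j => vertex_index (w (lshift m j)))) => // j.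
exact: cycle_plus_clique_on_cycle (on_all j) (w_hom.1 j).
Qed.

Lemma hom_avoids_first_edge i : ~~ first_edge (w i).
Proof.
rewrite /first_edge; case: (split_ordP i) => j ->.
  by rewrite (negbTE (cycle_part_off_cycle j)).
by rewrite (negbTE (clique_part_off_cycle j)).
Qed.

End HomFromCycleClique.
End CyclePlusClique.

Theorem mainTheorem18 (n : nat) (M : nat -> Prop) :
  Nhat n ->
  (forall m, M m -> Nhat m /\ m <> n) ->
  exists f : pfun,
    [/\ inT f, (forall m, M m -> pPol (@R02 m) f) & ~ pPol (@R02 n) f].
Proof.
move=> [_ n_gt2] HM.
have adj_irr := cycle_plus_clique_irr n_gt2.
have adj_sym := @cycle_plus_clique_sym n.
exists (graph_pfun (@cycle_plus_clique n) (@first_edge n)); split.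
- exact: graph_pfun_inT.
- move=> m /HM[[odd_m m_gt2] /eqP m_neq_n].
  apply/pPol_R02_graph => // w w_hom.
  have avoid := hom_avoids_first_edge n_gt2 odd_m m_gt2 m_neq_n w_hom.
  by apply/R02P; split=> *; rewrite !ffunE (negbTE (avoid _)).
- move/(pPol_R02_graph adj_irr adj_sym) => /(_ _ (split_cycle_clique_hom n)).
  exact/negP/split_not_R02.
Qed.
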